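(* Let $f:\mathbb{R}^n\to\mathbb{R}$ be differentiable with $\nabla f$ $L$-Lipschitz continuous ($L>0$), let $\beta\in[0,1]$, $h=\frac{0.9}{L}$, and let $x\in\mathbb{R}^n$ with $\nabla f(x)\neq0$. Put $z=x-h\nabla f(x)$ and $$\alpha=\frac{(1-\beta)\left(1-\frac{Lh}{4}\right)\|x-z\|^2+\beta\langle x-z,h\nabla f(z)\rangle}{h^2\|\nabla f(x)-\beta(\nabla f(x)-\nabla f(z))\|^2}.$$ Then the denominator is nonzero and $\alpha>\frac12$; consequently $\eta:=1/\alpha\in(0,2)$ and $x-\eta\alpha h\big(\nabla f(x)-\beta(\nabla f(x)-\nabla f(z))\big)=x-h\big(\nabla f(x)-\beta(\nabla f(x)-\nabla f(z))\big)$. *)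

From HB Require Import structures.
From mathcomp Require Import all_boot all_order all_algebra.
From mathcomp Require Import all_classical all_reals all_analysis.
Set Implicit Arguments. Unset Strict Implicit. Unset Printing Implicit Defensive.
Import Order.TTheory GRing.Theory Num.Theory.
Import numFieldNormedType.Exports.
Local Open Scope ring_scope.

Definition dotp {R : realType} {n : nat} (u v : 'rV[R]_n) : R :=
  \sum_(i < n) u ord0 i * v ord0 i.

Definition enorm {R : realType} {n : nat} (u : 'rV[R]_n) : R :=
  Num.sqrt (dotp u u).

Definition is_gradient {R : realType} {n : nat}
  (f : 'rV[R]_n -> R) (g : 'rV[R]_n -> 'rV[R]_n) : Prop :=
  forall x, differentiable f x /\ forall v, 'd f x v = dotp (g x) v.

Definition lipschitz_eucl {R : realType} {n : nat}
  (L : R) (g : 'rV[R]_n -> 'rV[R]_n) : Prop :=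
  forall x y, enorm (g x - g y) <= L * enorm (x - y).

From HB Require Import structures.
From mathcomp Require Import all_boot all_order all_algebra.
From mathcomp Require Import all_classical all_reals all_analysis.
From mathcomp Require Import ring lra.
Import Order.TTheory GRing.Theory Num.Theory.
Import numFieldNormedType.Exports.
Local Open Scope ring_scope.

(* Write a := grad f(x), b := grad f(z) and e := a - b.  The search direction is
   d = a - beta e, and since x - z = h a, alpha > 1/2 reduces (after cancelling
   h^2) to |d|^2 < 2((1 - beta)(1 - k/4)|a|^2 + beta <a, b>) with k = L h.
   Expanding, twice the right-hand side minus |d|^2 equals
   |a|^2 - (k/2)(1 - beta)|a|^2 - beta^2 |e|^2, and the Lipschitz bound
   |e| <= L |x - z| = k |a| makes this at least (1 - k)|a|^2 > 0 for k < 1.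
   The same bound shows d != 0: d = 0 would force |a| = beta |e| <= k |a|. *)

Section InnerProduct.
Context {R : realType} {n : nat}.
Implicit Types (u v w : 'rV[R]_n) (k : R).

Lemma dotpC u v : dotp u v = dotp v u.
Proof. by apply: eq_bigr => i _; rewrite mulrC. Qed.

Lemma dotpDl u v w : dotp (u + v) w = dotp u w + dotp v w.
Proof. by rewrite /dotp -big_split; apply: eq_bigr => i _; rewrite mxE mulrDl. Qed.

Lemma dotpZl k u w : dotp (k *: u) w = k * dotp u w.
Proof. by rewrite /dotp mulr_sumr; apply: eq_bigr => i _; rewrite mxE mulrA. Qed.

Lemma dotpNl u w : dotp (- u) w = - dotp u w.
Proof. by rewrite -scaleN1r dotpZl mulN1r. Qed.

Lemma dotpDr u v w : dotp w (u + v) = dotp w u + dotp w v.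
Proof. by rewrite dotpC dotpDl !(dotpC w). Qed.

Lemma dotpZr k u w : dotp w (k *: u) = k * dotp w u.
Proof. by rewrite dotpC dotpZl dotpC. Qed.

Lemma dotpNr u w : dotp w (- u) = - dotp w u.
Proof. by rewrite dotpC dotpNl dotpC. Qed.

Lemma dotp_subZ k u v :
  dotp (u - k *: v) (u - k *: v) =
  dotp u u - 2 * k * dotp u v + k ^+ 2 * dotp v v.
Proof.
rewrite !(dotpDl, dotpDr, dotpNl, dotpNr, dotpZl, dotpZr) (dotpC v u); ring.
Qed.

Lemma dotp_ge0 u : 0 <= dotp u u.
Proof. by apply: sumr_ge0 => i _; rewrite -expr2 sqr_ge0. Qed.

Lemma dotp_gt0 u : u != 0 -> 0 < dotp u u.
Proof.
move=> u0; rewrite lt_def dotp_ge0 andbT; apply: contra u0.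
rewrite psumr_eq0 => [/allP u_eq0|i _]; last by rewrite -expr2 sqr_ge0.
apply/eqP/rowP => i; rewrite mxE.
by have := u_eq0 i (mem_index_enum _); rewrite /= mulf_eq0 orbb => /eqP.
Qed.

Lemma enorm_sq u : enorm u ^+ 2 = dotp u u.
Proof. by rewrite sqr_sqrtr // dotp_ge0. Qed.

Lemma enormZ k u : enorm (k *: u) = `|k| * enorm u.
Proof. by rewrite /enorm dotpZl dotpZr mulrA sqrtrM ?sqr_ge0 // sqrtr_sqr. Qed.

Lemma dotp_le_of_enorm_le k u v :
  enorm u <= k * enorm v -> dotp u u <= k ^+ 2 * dotp v v.
Proof.
by move=> uv; rewrite -!enorm_sq -exprMn lerXn2r ?nnegrE ?sqrtr_ge0 //;
  apply: le_trans uv; rewrite sqrtr_ge0.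
Qed.

End InnerProduct.

Section DampedDirection.
Context {R : realType} {n : nat} {a b : 'rV[R]_n} {k beta : R}.
Hypotheses (a0 : a != 0) (k0 : 0 <= k) (k1 : k < 1) (beta0 : 0 <= beta)
  (beta1 : beta <= 1) (ab_lip : dotp (a - b) (a - b) <= k ^+ 2 * dotp a a).

Let d := a - beta *: (a - b).
Let A := dotp a a.
Let p := dotp a (a - b).
Let E := dotp (a - b) (a - b).

Let A_gt0 : 0 < A. Proof. exact: dotp_gt0. Qed.

Let betak_ge0 : 0 <= beta * k. Proof. exact: mulr_ge0. Qed.

Let betak_lt1 : beta * k < 1.
Proof. exact: le_lt_trans (ler_piMl k0 beta1) k1. Qed.

Let dE : dotp d d = A - 2 * beta * p + beta ^+ 2 * E.
Proof. exact: dotp_subZ. Qed.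

Lemma damped_direction_neq0 : d != 0.
Proof.
apply/eqP => /eqP; rewrite subr_eq0 => /eqP a_eq.
have AE : A = beta ^+ 2 * E by rewrite /A {1 2}a_eq dotpZl dotpZr mulrA.
have : A <= (beta * k) ^+ 2 * A.
  by rewrite {1}AE exprMn -(mulrA (beta ^+ 2)) (ler_wpM2l (sqr_ge0 beta) ab_lip).
have : (beta * k) ^+ 2 < 1 by rewrite expr_lt1.
by have := A_gt0; nra.
Qed.

Lemma damped_direction_sq_lt :
  dotp d d < 2 * ((1 - beta) * (1 - k / 4) * A + beta * dotp a b).
Proof.
have abE : dotp a b = A - p.
  by rewrite /p dotpDr dotpNr opprB addrC subrK.
have betaE_le : beta ^+ 2 * E <= beta * k * A.
  apply: le_trans (ler_wpM2l (sqr_ge0 beta) ab_lip) _.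
  rewrite mulrA -exprMn ler_wpM2r ?(ltW A_gt0) //.
  by rewrite expr2 ler_piMl // ltW.
have betakA_le : beta * k * A <= k * A.
  by rewrite -mulrA; apply: ler_piMl; rewrite ?mulr_ge0 ?(ltW A_gt0).
have kA_lt : k * A < A by rewrite gtr_pMl.
by rewrite dE abE; lra.
Qed.

End DampedDirection.

Theorem mainTheorem14 (R : realType) (n : nat) (f : 'rV[R]_n -> R)
  (g : 'rV[R]_n -> 'rV[R]_n) (L beta : R) (x : 'rV[R]_n) :
  is_gradient f g -> 0 < L -> lipschitz_eucl L g ->
  0 <= beta <= 1 -> g x != 0 ->
  let h := (9 / 10) / L in
  let z := x - h *: g x in
  let d := g x - beta *: (g x - g z) in
  let den := h ^+ 2 * enorm d ^+ 2 in
  let alpha := ((1 - beta) * (1 - L * h / 4) * enorm (x - z) ^+ 2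
                + beta * dotp (x - z) (h *: g z)) / den in
  let eta := alpha^-1 in
  [/\ den != 0, 1 / 2 < alpha, 0 < eta < 2 &
      x - (eta * alpha * h) *: d = x - h *: d].
Proof.
move=> _ L0 lip /andP[beta0 beta1] gx0 h z d den alpha eta.
have Lh : L * h = 9 / 10 by rewrite /h mulrC divfK ?gt_eqF.
have h0 : 0 < h by rewrite /h divr_gt0.
have xz : x - z = h *: g x by rewrite /z opprB addrC subrK.
have k0 : 0 <= 9 / 10 :> R by [].
have k1 : 9 / 10 < 1 :> R by lra.
have gz_lip : dotp (g x - g z) (g x - g z) <= (9 / 10) ^+ 2 * dotp (g x) (g x).
  apply: dotp_le_of_enorm_le.
  by rewrite -Lh -mulrA -(gtr0_norm h0) -enormZ -xz lip.
have d_gt0 : 0 < dotp d d.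
  exact/dotp_gt0/(damped_direction_neq0 gx0 k0 k1 beta0 beta1 gz_lip).
have den_gt0 : 0 < den by rewrite /den enorm_sq mulr_gt0 ?exprn_gt0.
have alphaE : alpha = ((1 - beta) * (1 - 9 / 10 / 4) * dotp (g x) (g x)
                       + beta * dotp (g x) (g z)) / dotp d d.
  rewrite /alpha /den !enorm_sq xz !dotpZl !dotpZr Lh.
  by field; rewrite (gt_eqF d_gt0) (gt_eqF h0).
have alpha_gt : 1 / 2 < alpha.
  rewrite alphaE ltr_pdivlMr //.
  have := damped_direction_sq_lt gx0 k0 k1 beta0 beta1 gz_lip.
  by rewrite -/d; lra.
have alpha_gt0 : 0 < alpha by apply: lt_trans alpha_gt; lra.
split=> //; first by rewrite gt_eqF.
  by rewrite invr_gt0 alpha_gt0 -[2]invrK ltf_pV2 ?posrE //; lra.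
by rewrite /eta mulVf ?gt_eqF // mul1r.
Qed.
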